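(* Let $G$ be a finite group and let $p\in\pi(G)$ be a prime with $p\in\mu(G)$. Then $p^{p-2}$ divides $\kappa(G)$.
   Context: For a finite group $G$, the power graph $\mathcal{P}(G)$ is the simple undirected graph with vertex set $G$, two distinct vertices $x,y$ being adjacent iff $\langle x\rangle\subseteq\langle y\rangle$ or $\langle y\rangle\subseteq\langle x\rangle$; $\kappa(G)$ is the number of spanning trees of $\mathcal{P}(G)$. $\pi(G)$ is the set of prime divisors of $|G|$. $\pi_e(G)$ is the set of orders of elements of $G$, and $\mu(G)$ is the set of elements of $\pi_e(G)$ that are maximal with respect to divisibility. *)

From mathcomp Require Import all_boot all_fingroup.
Set Implicit Arguments. Unset Strict Implicit. Unset Printing Implicit Defensive.
Local Open Scope group_scope.

Section PowerGraph.
Variable gT : finGroupType.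

Definition power_adj (x y : gT) : bool :=
  (x != y) && ((<[x]> \subset <[y]>) || (<[y]> \subset <[x]>)).

Definition power_edges (G : {set gT}) : {set {set gT}} :=
  [set e | [exists x in G, exists y in G, (e == [set x; y]) && power_adj x y]].

Definition edge_rel (E : {set {set gT}}) : rel gT := fun x y => [set x; y] \in E.

(* T is a spanning tree of P(G): a set of edges of P(G) that is connected on
   the vertex set G and acyclic (no edge of T lies on a cycle in T, i.e. the
   endpoints of each edge are disconnected once that edge is removed). *)
Definition power_spanning_tree (G : {set gT}) (T : {set {set gT}}) : bool :=
  [&& T \subset power_edges G,
      [forall x in G, forall y in G, connect (edge_rel T) x y] &
      [forall e in T, forall x, forall y,
         (e == [set x; y]) ==> ~~ connect (edge_rel (T :\ e)) x y]].

Definition kappa (G : {set gT}) : nat :=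
  #|[set T : {set {set gT}} | power_spanning_tree G T]|.

Definition pi_e (G : {set gT}) : pred nat := fun n => [exists x in G, #[x] == n].

Definition mu (G : {set gT}) : pred nat :=
  fun n => (n \in pi_e G) && [forall y in G, (n %| #[y]) ==> (#[y] == n)].

End PowerGraph.

From mathcomp Require Import all_boot all_fingroup cyclic ssralg ssrnum rat.
From mathcomp Require Import zify ring.
Set Implicit Arguments. Unset Strict Implicit. Unset Printing Implicit Defensive.
Import GRing.Theory Num.Theory.

(* Let g have prime order p, maximal in pi_e(G). A nontrivial x in <[g]> generates
   <[g]>, so a neighbour y of x in P(G) has <[g]> = <[x]> comparable with <[y]>;
   maximality of p forces y \in <[g]>. Hence P(G) is the complete graph on <[g]>
   glued at the single vertex 1 to the graph on G minus the nontrivial elements of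
   <[g]>, its spanning trees are exactly the unions of a spanning tree of each part,
   and kappa(G) is a multiple of p^(p-2), the number of spanning trees of K_p.
   Cayley's formula comes from its refinement: in K_n, a forest F with k + 1
   components of sizes a_1, ..., a_(k+1) lies in n^(k-1) a_1...a_(k+1) spanning trees.
   This goes by induction on k, resting on double counting the pairs of a spanning tree T
   containing F and an ordered edge uv of T outside F, and on the identity that the
   products of component sizes of the forests F + uv sum to 2nk a_1...a_(k+1). *)

Lemma connect_ind (T : finType) (e : rel T) (P : T -> Prop) x y :
  P x -> (forall a b, P a -> e a b -> P b) -> connect e x y -> P y.
Proof.
move=> Px eP /connectP [s + ->]; elim: s x Px => //= b s IHs a Pa /andP[eab].
exact: IHs (eP _ _ Pa eab).
Qed.

Lemma connect_homo (T : finType) (e e' : rel T) (f : T -> T) x y :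
  (forall a b, e a b -> connect e' (f a) (f b)) ->
  connect e x y -> connect e' (f x) (f y).
Proof.
move=> ef; apply: (connect_ind (P := fun z => connect e' (f x) (f z))) => // a b xa ab.
exact: connect_trans xa (ef _ _ ab).
Qed.

Section EdgeSets.
Variable gT : finGroupType.
Implicit Types (E F T : {set {set gT}}) (C : {set gT}).

Lemma eq_set2 (x y u v : gT) : [set x; y] = [set u; v] ->
  (x = u /\ y = v) \/ (x = v /\ y = u).
Proof.
move=> exy.
have: v \in [set x; y] by rewrite exy set22.
have: u \in [set x; y] by rewrite exy set21.
have: y \in [set u; v] by rewrite -exy set22.
have: x \in [set u; v] by rewrite -exy set21.
rewrite !inE; do 2![case/orP=> /eqP ?]; subst; rewrite ?eqxx ?orbb ?orbT //=.
- by move=> _ /eqP ->; left.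
- by left.
- by right.
- by move=> /eqP -> _; right.
Qed.

Lemma edge_rel_sym F : symmetric (edge_rel F).
Proof. by move=> x y; rewrite /edge_rel setUC. Qed.

Lemma connect_edge_sym F : connect_sym (edge_rel F).
Proof. exact/sym_connect_sym/edge_rel_sym. Qed.

Lemma connect_edgeS F F' x y : F \subset F' ->
  connect (edge_rel F) x y -> connect (edge_rel F') x y.
Proof. by move=> sFF'; apply: connect_sub => a b ab; apply/connect1/(subsetP sFF'). Qed.

Lemma connect_edge0 (x y : gT) : connect (edge_rel set0) x y -> y = x.
Proof. by apply: (connect_ind (P := eq^~ x)) => // a b _; rewrite /edge_rel inE. Qed.

Lemma connect_edgeU1 F u v a b :
  connect (edge_rel ([set u; v] |: F)) a b =
  [|| connect (edge_rel F) a b,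
      connect (edge_rel F) a u && connect (edge_rel F) v b
    | connect (edge_rel F) a v && connect (edge_rel F) u b].
Proof.
set c := connect (edge_rel F).
have cT x y z : c x y -> c y z -> c x z by apply: connect_trans.
apply/idP/idP.
  apply: (connect_ind (P := fun z => [|| c a z, c a u && c v z | c a v && c u z])).
    by rewrite /c connect0.
  move=> a' b' + e'; rewrite /edge_rel in_setU1 in e'.
  have [/eqP/eq_set2 [[-> ->]|[-> ->]] | F_a'b'] := orP e'.
  - by case/or3P=> [h|/andP[h _]|/andP[h _]]; rewrite h /c connect0 ?orbT.
  - by case/or3P=> [h|/andP[h _]|/andP[h _]]; rewrite h /c connect0 ?orbT.
  have ca'b' : c a' b' by apply: connect1.
  case/or3P=> [h1|/andP[h1 h2]|/andP[h1 h2]].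
  - by rewrite (cT _ _ _ h1 ca'b').
  - by rewrite h1 (cT _ _ _ h2 ca'b') orbT.
  - by rewrite h1 (cT _ _ _ h2 ca'b') !orbT.
have sF : F \subset [set u; v] |: F by apply: subsetUr.
have euv : edge_rel ([set u; v] |: F) u v by rewrite /edge_rel setU11.
have evu : edge_rel ([set u; v] |: F) v u by rewrite edge_rel_sym.
case/or3P=> [h|/andP[h1 h2]|/andP[h1 h2]]; first exact: connect_edgeS h.
  apply: connect_trans (connect_edgeS sF h1) _.
  exact: connect_trans (connect1 euv) (connect_edgeS sF h2).
apply: connect_trans (connect_edgeS sF h1) _.
exact: connect_trans (connect1 evu) (connect_edgeS sF h2).
Qed.

(* [connected_on] and [forest] are the last two conditions of [power_spanning_tree],
   so [kappa G] is convertible to [#|spanning_trees (power_edges G) G|]. *)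
Definition forest F := [forall e in F, forall x, forall y,
  (e == [set x; y]) ==> ~~ connect (edge_rel (F :\ e)) x y].

Definition connected_on F C := [forall x in C, forall y in C, connect (edge_rel F) x y].

Definition spanning_trees E C :=
  [set T : {set {set gT}} | [&& T \subset E, connected_on T C & forest T]].

Lemma forestP F : reflect (forall x y, [set x; y] \in F ->
  ~~ connect (edge_rel (F :\ [set x; y])) x y) (forest F).
Proof.
apply: (iffP forall_inP) => [Fe x y xy | Fe e eF].
  by have /forallP/(_ x)/forallP/(_ y) := Fe _ xy; rewrite eqxx.
apply/forallP=> x; apply/forallP=> y; apply/implyP=> /eqP exy.
by move: eF; rewrite exy; apply: Fe.
Qed.

Lemma connected_onP F C :
  reflect {in C &, forall x y, connect (edge_rel F) x y} (connected_on F C).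
Proof.
apply: (iffP forall_inP) => [FC x y xC yC | FC x xC].
  by have /forall_inP := FC _ xC; apply.
by apply/forall_inP => y yC; apply: FC.
Qed.

Lemma spanning_treesP E C T :
  reflect [/\ T \subset E, connected_on T C & forest T] (T \in spanning_trees E C).
Proof. by rewrite inE; apply: and3P. Qed.

Lemma forestS F F' : F' \subset F -> forest F -> forest F'.
Proof.
move=> sF'F /forestP Ff; apply/forestP => x y xy.
by apply: contra (Ff x y (subsetP sF'F _ xy)); apply/connect_edgeS/setSD.
Qed.

Lemma forestU1 F u v :
  ~~ connect (edge_rel F) u v -> forest F -> forest ([set u; v] |: F).
Proof.
set c := connect (edge_rel F) => nuv /forestP Ff; apply/forestP => x y.
have sc := connect_edge_sym F.
have uvF : [set u; v] \notin F by apply: contra nuv => uvF; apply: connect1.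
rewrite in_setU1 => /orP[/eqP exy|xyF].
  rewrite exy setU1K //.
  by have [[-> ->]|[-> ->]] := eq_set2 exy; rewrite // sc.
have ne : [set x; y] != [set u; v] by apply: contraNneq uvF => <-.
have -> : ([set u; v] |: F) :\ [set x; y] = [set u; v] |: (F :\ [set x; y]).
  by apply/setP => X; rewrite !inE; case: eqP => // ->; rewrite (negbTE ne).
rewrite connect_edgeU1 (negbTE (Ff _ _ xyF)) /=.
have sdF : F :\ [set x; y] \subset F by apply: subD1set.
have cxy : c x y by apply: connect1.
apply: contra nuv => /orP[]/andP[/(connect_edgeS sdF) xu' /(connect_edgeS sdF) v'y].
  by rewrite sc in xu'; rewrite sc in v'y; apply: connect_trans xu' (connect_trans cxy v'y).
have cyx : c y x by rewrite /c sc.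
exact: connect_trans v'y (connect_trans cyx xu').
Qed.

End EdgeSets.

Section Components.
Variable gT : finGroupType.
Implicit Types (F : {set {set gT}}) (C : {set gT}).

Definition component F C z := [set w in C | connect (edge_rel F) z w].
Definition components F C := [set component F C z | z in C].

Lemma component_id F C z : z \in C -> z \in component F C z.
Proof. by move=> zC; rewrite inE zC connect0. Qed.

Lemma component_sub F C z : component F C z \subset C.
Proof. by apply/subsetP => w; rewrite inE => /andP[]. Qed.

Lemma component_eq F C z w :
  connect (edge_rel F) z w -> component F C z = component F C w.
Proof.
by move=> zw; apply/setP => t; rewrite !inE (same_connect (connect_edge_sym F) zw).
Qed.

Lemma eq_component F C z w :
  w \in C -> (component F C z == component F C w) = connect (edge_rel F) z w.
Proof.
move=> wC; apply/eqP/idP => [ezw|]; last exact: component_eq.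
by have := component_id F wC; rewrite -ezw inE => /andP[].
Qed.

Lemma componentsP F C X w :
  X \in components F C -> w \in X -> X = component F C w.
Proof. by case/imsetP => z _ -> /[!inE] /andP[_]; apply: component_eq. Qed.

Lemma card_component_gt0 F C z : z \in C -> 0 < #|component F C z|.
Proof. by move=> zC; apply/card_gt0P; exists z; apply: component_id. Qed.

Lemma components0 C : components set0 C = [set [set z] | z in C].
Proof.
apply: eq_in_imset => z zC; apply/setP => w; rewrite !inE.
by apply/andP/eqP => [[_ /connect_edge0] //|->]; rewrite zC connect0.
Qed.

Lemma card_components0 C : #|components set0 C| = #|C|.
Proof. by rewrite components0 card_imset //; apply: set1_inj. Qed.

Lemma components_connected F C z :
  z \in C -> connected_on F C -> components F C = [set C].
Proof.
move=> zC /connected_onP FC.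
have compC w : w \in C -> component F C w = C.
  by move=> wC; apply/setP => t; rewrite inE; case tC: (t \in C); rewrite //= FC.
apply/setP => X; rewrite inE; apply/imsetP/eqP => [[w wC ->]|->]; first exact: compC.
by exists z; rewrite ?compC.
Qed.

Lemma connected_on_components1 F C : #|components F C| = 1 -> connected_on F C.
Proof.
case/eqP/cards1P => X eX; apply/connected_onP => x y xC yC.
have: component F C x \in components F C by apply: imset_f.
have: component F C y \in components F C by apply: imset_f.
by rewrite eX !inE -(eq_component F x yC) => /eqP-> /eqP->.
Qed.

Definition components_weight F C := \prod_(X in components F C) #|X|.

Lemma components_weight0 C : components_weight set0 C = 1.
Proof.
by rewrite /components_weight components0 big1 // => _ /imsetP[z _ ->]; apply: cards1.
Qed.

Section AddEdge.
Variables (F : {set {set gT}}) (C : {set gT}) (u v : gT).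
Hypotheses (uC : u \in C) (vC : v \in C) (nuv : ~~ connect (edge_rel F) u v).
Local Notation c := (connect (edge_rel F)).
Local Notation F' := ([set u; v] |: F).
Local Notation Cu := (component F C u).
Local Notation Cv := (component F C v).

Lemma componentU1 z : component F' C z = if c z u || c z v then Cu :|: Cv
                                          else component F C z.
Proof.
have sc := connect_edge_sym F.
apply/setP => w; rewrite inE connect_edgeU1.
case zu: (c z u) => /=.
  rewrite !(same_connect sc zu) (negbTE nuv) /= !inE.
  by case: (w \in C); rewrite //= ?orbF.
case zv: (c z v) => /=; last by rewrite !inE; case: (c z w); rewrite ?andbT ?andbF.
by rewrite !(same_connect sc zv) !inE; case: (w \in C); rewrite //= orbC.
Qed.

Lemma component_neq : Cu != Cv.
Proof. by rewrite eq_component. Qed.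

Lemma componentU_notin : Cu :|: Cv \notin components F C.
Proof.
apply/negP => /componentsP uvE.
have ECu : Cu :|: Cv = Cu by apply: uvE; rewrite inE component_id.
have : v \in Cu by rewrite -ECu inE (component_id _ vC) orbT.
by rewrite inE vC /= (negbTE nuv).
Qed.

Lemma components_sub2 : [set Cu; Cv] \subset components F C.
Proof. by apply/subsetP => X; rewrite !inE => /orP[]/eqP->; apply: imset_f. Qed.

Lemma componentsU1 :
  components F' C = (Cu :|: Cv) |: (components F C :\: [set Cu; Cv]).
Proof.
apply/setP => X; apply/imsetP/idP.
  case=> z zC ->; rewrite componentU1; case: ifP => [_|]; first by rewrite setU11.
  move/norP=> [zu zv]; rewrite !inE (imset_f _ zC) andbT.
  by rewrite !eq_component // (negbTE zu) (negbTE zv) orbT.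
rewrite !inE => /orP[/eqP ->|/andP[/norP[Xu Xv] /imsetP[z zC eX]]].
  by exists u => //; rewrite componentU1 connect0.
exists z => //; rewrite componentU1 -eX.
by rewrite eX !eq_component // in Xu Xv; rewrite (negbTE Xu) (negbTE Xv).
Qed.

Lemma componentU_notin_rest : Cu :|: Cv \notin components F C :\: [set Cu; Cv].
Proof. by rewrite inE negb_and componentU_notin orbT. Qed.

Lemma card_componentsU1 : (#|components F' C|).+1 = #|components F C|.
Proof.
rewrite componentsU1 cardsU1 componentU_notin_rest cardsD (setIidPr components_sub2).
have := subset_leq_card components_sub2.
by rewrite cards2 component_neq add1n => le2; rewrite -addn2 subnK.
Qed.

Lemma components_weightU1 :
  components_weight F' C * (#|Cu| * #|Cv|) =
  components_weight F C * (#|Cu| + #|Cv|).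
Proof.
have [Cu_in Cv_in] : Cu \in components F C /\ Cv \in components F C.
  by split; apply: imset_f.
have disj : [disjoint Cu & Cv].
  apply/pred0P => w /=; rewrite !inE.
  apply/negP => /andP[/andP[_ uw] /andP[_ vw]].
  by move: nuv; rewrite (connect_trans uw _) // connect_edge_sym.
rewrite /components_weight componentsU1 big_setU1 ?componentU_notin_rest //=.
rewrite cardsU (disjoint_setI0 disj) cards0 subn0.
rewrite [in RHS](bigD1 Cu) //= [in RHS](bigD1 Cv) /=; last first.
  by rewrite eq_sym component_neq andbT.
rewrite (eq_bigl (fun X => (X \in components F C) && (X != Cu) && (X != Cv))); last first.
  by move=> X; rewrite !inE negb_or andbC andbA.
move: (#|_|) (#|_|) (\prod_(X | _) _) => a b q; nia.
Qed.

End AddEdge.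

End Components.

Section Clique.
Variable gT : finGroupType.
Implicit Types (E F T : {set {set gT}}) (C : {set gT}).

Definition clique_edges C := [set e : {set gT} |
  [exists x in C, exists y in C, (x != y) && (e == [set x; y])]].

Lemma mem_clique_edges C x y :
  ([set x; y] \in clique_edges C) = [&& x \in C, y \in C & x != y].
Proof.
apply/idP/idP; last first.
  case/and3P => xC yC xy; rewrite inE; apply/exists_inP; exists x => //.
  by apply/exists_inP; exists y; rewrite ?xy ?eqxx.
rewrite inE => /exists_inP[a aC /exists_inP[b bC /andP[ab /eqP/eq_set2]]].
by case=> [[-> ->]|[-> ->]]; rewrite ?aC ?bC // eq_sym ab.
Qed.

Lemma clique_edgesP C e : e \in clique_edges C ->
  exists x y, [/\ e = [set x; y], x \in C, y \in C & x != y].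
Proof.
by rewrite inE => /exists_inP[a aC /exists_inP[b bC /andP[ab /eqP ->]]]; exists a, b.
Qed.

Lemma sum_pair_indicator (a b : gT) :
  \sum_(u : gT) \sum_(v : gT) ((u == a) && (v == b) : nat) = 1.
Proof.
have row u : \sum_v ((u == a) && (v == b) : nat) = (u == a).
  rewrite (bigD1 b) //= eqxx andbT big1 ?addn0 // => v /negbTE ->.
  by rewrite andbF.
under eq_bigr => u _ do rewrite row.
by rewrite (bigD1 a) //= eqxx big1 // => u /negbTE ->.
Qed.

Lemma sum_adjacent_pairs C E : E \subset clique_edges C ->
  \sum_(u : gT) \sum_(v : gT) ((u != v) && ([set u; v] \in E) : nat) = 2 * #|E|.
Proof.
move=> sEC.
have split_E u v : ((u != v) && ([set u; v] \in E) : nat) =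
    \sum_(e in E) ((u != v) && ([set u; v] == e) : nat).
  have [uvE|uvE] /= := boolP ([set u; v] \in E).
    rewrite (bigD1 _ uvE) /= eqxx andbT big1 ?addn0 // => e /andP[_ ne].
    by rewrite [[set u; v] == e]eq_sym (negbTE ne) andbF.
  rewrite andbF big1 // => e eE; case: ([set u; v] =P e) => [euv|_]; last by rewrite andbF.
  by move: uvE; rewrite euv eE.
under eq_bigr => u _ do under eq_bigr => v _ do rewrite split_E.
under eq_bigr => u _ do rewrite exchange_big /=.
rewrite exchange_big /= -sum1_card big_distrr /=; apply: eq_bigr => e eE.
have [x [y [-> _ _ xy]]] := clique_edgesP (subsetP sEC _ eE).
have orient u v : ((u != v) && ([set u; v] == [set x; y]) : nat) =
   ((u == x) && (v == y) : nat) + ((u == y) && (v == x) : nat).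
  have [/eqP/eq_set2 [[-> ->]|[-> ->]]|ne] := boolP ([set u; v] == [set x; y]).
  - by rewrite (negbTE xy) !eqxx.
  - by rewrite eq_sym (negbTE xy) !eqxx.
  rewrite andbF; have [/andP[/eqP eu /eqP ev]|_] := boolP ((u == x) && (v == y)).
    by move: ne; rewrite eu ev eqxx.
  have [/andP[/eqP eu /eqP ev]|_] // := boolP ((u == y) && (v == x)).
  by move: ne; rewrite eu ev setUC eqxx.
under eq_bigr => u _ do under eq_bigr => v _ do rewrite orient.
under eq_bigr => u _ do rewrite big_split /=.
by rewrite big_split /= !sum_pair_indicator muln1.
Qed.

Lemma card_forest_components C F : F \subset clique_edges C -> forest F ->
  #|F| + #|components F C| = #|C|.
Proof.
move: {2}#|F| (erefl #|F|) => k; elim: k F => [|k IHk] F cardF sFC Ff.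
  by rewrite (cards0_eq cardF) card_components0 cards0.
have [e eF] : exists e, e \in F by apply/card_gt0P; rewrite cardF.
have [x [y [exy xC yC _]]] := clique_edgesP (subsetP sFC _ eF).
have sF'F : F :\ e \subset F by apply: subD1set.
have cardF' : #|F :\ e| = k by move: cardF; rewrite (cardsD1 e) eF add1n => -[].
have nxy : ~~ connect (edge_rel (F :\ e)) x y.
  by move/forestP: Ff => /(_ x y); rewrite -exy; apply.
have := IHk _ cardF' (subset_trans sF'F sFC) (forestS sF'F Ff).
by rewrite -(card_componentsU1 xC yC nxy) -exy setD1K // cardF' cardF addnS.
Qed.

Lemma forest_edge_connectE F T u v : F \subset T -> forest T -> [set u; v] \in T ->
  connect (edge_rel F) u v = ([set u; v] \in F).
Proof.
move=> sFT /forestP Tf uvT; apply/idP/idP => [|uvF]; last exact: connect1.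
apply: contraTT => uvF; apply: contra (Tf _ _ uvT); apply: connect_edgeS.
apply/subsetP => e eF; rewrite !inE (subsetP sFT _ eF) andbT.
by apply: contraNneq uvF => <-.
Qed.

End Clique.

Section Cayley.
Variable gT : finGroupType.
Implicit Types (F T : {set {set gT}}) (C : {set gT}).

Definition trees_over C F :=
  [set T in spanning_trees (clique_edges C) C | F \subset T].

Lemma mem_trees_over C F T :
  (T \in trees_over C F) = (T \in spanning_trees (clique_edges C) C) && (F \subset T).
Proof. by rewrite inE. Qed.

Lemma trees_over_tree C F z : z \in C -> F \in spanning_trees (clique_edges C) C ->
  trees_over C F = [set F].
Proof.
move=> zC FC; apply/setP => T; rewrite mem_trees_over inE.
apply/andP/eqP => [[TC sFT]|->]; last first.
  by rewrite FC subxx.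
have /spanning_treesP[sTC /(components_connected zC) compT Tf] := TC.
have /spanning_treesP[sFC /(components_connected zC) compF Ff] := FC.
have := card_forest_components sTC Tf; have := card_forest_components sFC Ff.
rewrite compT compF cards1 => cardF cardT; apply/esym/eqP.
by rewrite eqEcard sFT /= -(leq_add2r 1) cardT cardF.
Qed.

Lemma card_treeD_forest C F T z : z \in C ->
  T \in spanning_trees (clique_edges C) C -> F \subset T -> forest F ->
  #|T :\: F| = #|components F C| - 1.
Proof.
move=> zC /spanning_treesP[sTC /(components_connected zC) compT Tf] sFT Ff.
have := card_forest_components sTC Tf.
have := card_forest_components (subset_trans sFT sTC) Ff.
rewrite compT cards1 cardsD (setIidPr sFT).
have := subset_leq_card sFT; lia.
Qed.

(* Each tree [T] over the forest [F] is counted once per ordered pair of ends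
   of each of its #|C| - 1 - #|F| = #|components F C| - 1 edges outside [F]. *)
Lemma sum_card_trees_overU1 C F z : z \in C -> forest F ->
  \sum_(u in C) \sum_(v in C | ~~ connect (edge_rel F) u v)
     #|trees_over C ([set u; v] |: F)|
  = 2 * (#|components F C| - 1) * #|trees_over C F|.
Proof.
move=> zC Ff.
have indicator u v : #|trees_over C ([set u; v] |: F)| =
    \sum_(T in trees_over C F) ([set u; v] \in T : nat).
  rewrite -sum1_card big_mkcond [RHS]big_mkcond; apply: eq_bigr => T _.
  rewrite !mem_trees_over subUset sub1set.
  by case: (T \in _); case: ([set u; v] \in T); case: (F \subset T).
under eq_bigr => u _ do under eq_bigr => v _ do rewrite indicator.
under eq_bigr => u _ do rewrite exchange_big /=.
rewrite exchange_big /= -[#|trees_over C F|]sum1_card big_distrr /=; apply: eq_bigr => T.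
rewrite mem_trees_over => /andP[TC sFT]; have /spanning_treesP[sTC _ Tf] := TC.
have edge_cond u v : (u != v) && ([set u; v] \in T :\: F) =
    [&& u \in C, v \in C, ~~ connect (edge_rel F) u v & [set u; v] \in T].
  have [uvT|uvT] := boolP ([set u; v] \in T); last by rewrite !inE (negbTE uvT) !andbF.
  rewrite inE (forest_edge_connectE sFT Tf uvT) uvT !andbT.
  by have := subsetP sTC _ uvT; rewrite mem_clique_edges => /and3P[-> -> ->].
transitivity (\sum_(u : gT) \sum_(v : gT)
   ((u != v) && ([set u; v] \in T :\: F) : nat)).
  rewrite big_mkcond; apply: eq_bigr => u _; rewrite big_mkcond /=.
  case uC: (u \in C); last by rewrite big1 // => v _; rewrite edge_cond uC.
  by apply: eq_bigr => v _; rewrite edge_cond uC /= andbA; case: (_ && _).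
rewrite (sum_adjacent_pairs (subset_trans (subsetDl _ _) sTC)) muln1.
by rewrite (card_treeD_forest zC TC sFT Ff).
Qed.

Section WeightSums.
Local Open Scope ring_scope.
Variables (F : {set {set gT}}) (C : {set gT}).
Local Notation c := (connect (edge_rel F)).
Local Notation a z := (#|component F C z|%:R : rat).

Lemma card_component_neq0 z : z \in C -> a z != 0.
Proof. by move=> zC; rewrite pnatr_eq0 -lt0n card_component_gt0. Qed.

Lemma sum_inv_card_component u : u \in C ->
  \sum_(v in C | c u v) (a v)^-1 = 1.
Proof.
move=> uC; rewrite (eq_bigl [in component F C u]) => [|v]; last by rewrite !inE.
transitivity (\sum_(v in component F C u) (a u)^-1).
  by apply: eq_bigr => v /[!inE] /andP[_ uv]; rewrite (component_eq _ uv).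
by rewrite sumr_const -[_ *+ _]mulr_natr mulVf ?card_component_neq0.
Qed.

Lemma sum_inv_card_components : \sum_(z in C) (a z)^-1 = #|components F C|%:R.
Proof.
rewrite (partition_big_imset (component F C)) /=.
transitivity (\sum_(X in components F C) (1 : rat)); last by rewrite sumr_const.
apply: eq_bigr => _ /imsetP[z zC ->]; rewrite -[RHS](sum_inv_card_component zC).
by apply: eq_bigl => v; rewrite eq_component // connect_edge_sym.
Qed.

Lemma sum_inv_card_componentU1 u : u \in C ->
  \sum_(v in C | ~~ c u v) ((a u)^-1 + (a v)^-1) =
  (#|C|%:R - a u) / a u + (#|components F C|%:R - 1).
Proof.
move=> uC; rewrite big_split /=; congr (_ + _).
  rewrite sumr_const -[_ *+ _]mulr_natr mulrC; congr (_ * _).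
  have -> : #|[pred v in C | ~~ c u v]| = #|C :\: component F C u|.
    by apply: eq_card => v; rewrite !inE; case: (v \in C); rewrite ?andbF ?andbT.
  rewrite cardsD (setIidPr (component_sub _ _ _)) natrB //.
  by rewrite subset_leq_card ?component_sub.
rewrite -sum_inv_card_components [in RHS](bigID (c u)) /= sum_inv_card_component //.
by rewrite addrC addrK.
Qed.

Lemma components_weightU1_rat u v : u \in C -> v \in C -> ~~ c u v ->
  (components_weight ([set u; v] |: F) C)%:R =
  (components_weight F C)%:R * ((a u)^-1 + (a v)^-1) :> rat.
Proof.
move=> uC vC nuv; have := components_weightU1 uC vC nuv.
move/(congr1 (fun k => k%:R : rat)); rewrite !natrM natrD => eqW.
have au := card_component_neq0 uC; have av := card_component_neq0 vC.
by apply: (mulIf (mulf_neq0 au av)); rewrite eqW; field; rewrite au av.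
Qed.

End WeightSums.

Lemma sum_components_weightU1 C F :
  \sum_(u in C) \sum_(v in C | ~~ connect (edge_rel F) u v)
     components_weight ([set u; v] |: F) C
  = components_weight F C * (2 * #|C| * (#|components F C| - 1)).
Proof.
have [->|[z zC]] := set_0Vmem C; first by rewrite big_set0 cards0 !muln0.
apply/eqP; rewrite -(@eqr_nat rat) natr_sum; apply/eqP.
under eq_bigr => u _ do rewrite natr_sum.
rewrite !natrM natrB; last by apply/card_gt0P; exists (component F C z); apply: imset_f.
transitivity (\sum_(u in C) (components_weight F C)%:R *
  ((#|C|%:R - #|component F C u|%:R) / #|component F C u|%:R
   + (#|components F C|%:R - 1)) : rat)%R.
  apply: eq_bigr => u uC; rewrite -sum_inv_card_componentU1 // mulr_sumr.
  by apply: eq_bigr => v /andP[vC nuv]; apply: components_weightU1_rat.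
rewrite -mulr_sumr; congr (_ * _)%R.
transitivity (\sum_(u in C) (#|C|%:R * (#|component F C u|%:R)^-1
                             + (#|components F C|%:R - 2)) : rat)%R.
  by apply: eq_bigr => u uC; field; rewrite card_component_neq0.
rewrite big_split /= -mulr_sumr sum_inv_card_components sumr_const -[(_ *+ _)%R]mulr_natr.
ring.
Qed.

(* Multiplied by [#|C|] to avoid the exponent [k - 1] of the usual statement. *)
Lemma forest_cayley C F k z : z \in C -> F \subset clique_edges C -> forest F ->
  #|components F C| = k.+1 ->
  #|trees_over C F| * #|C| = #|C| ^ k * components_weight F C.
Proof.
move=> zC; elim: k F => [|k IHk] F sFC Ff compF.
  have FC : F \in spanning_trees (clique_edges C) C.
    by apply/spanning_treesP; split; rewrite // connected_on_components1.
  have /spanning_treesP[_ /(components_connected zC) compC _] := FC.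
  by rewrite (trees_over_tree zC FC) /components_weight compC big_set1 cards1.
have IH u v : u \in C -> (v \in C) && ~~ connect (edge_rel F) u v ->
    #|trees_over C ([set u; v] |: F)| * #|C|
    = #|C| ^ k * components_weight ([set u; v] |: F) C.
  move=> uC /andP[vC nuv]; apply: IHk; last first.
  - by apply: succn_inj; rewrite (card_componentsU1 uC vC nuv) compF.
  - exact: forestU1.
  rewrite subUset sub1set sFC mem_clique_edges uC vC andbT /=.
  by apply: contraNneq nuv => ->; apply: connect0.
have := sum_card_trees_overU1 zC Ff; have := sum_components_weightU1 C F.
rewrite compF subn1 /= => sumW sumN.
apply/eqP; rewrite -(eqn_pmul2l (_ : 0 < 2 * k.+1)) //; apply/eqP.
rewrite mulnA -sumN big_distrl /=.
under eq_bigr => u _ do rewrite big_distrl /=.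
under eq_bigr => u uC do under eq_bigr => v uv do rewrite IH //.
under eq_bigr => u _ do rewrite -big_distrr /=.
rewrite -big_distrr /= sumW expnS; lia.
Qed.

Lemma forest0 : forest (set0 : {set {set gT}}).
Proof. by apply/forestP => x y; rewrite inE. Qed.

Theorem cayley_formula C : #|spanning_trees (clique_edges C) C| = #|C| ^ (#|C| - 2).
Proof.
have [->|[z zC]] := set_0Vmem C.
  rewrite cards0 expn0; apply/eqP/cards1P; exists set0; apply/setP => T.
  rewrite in_set1; apply/spanning_treesP/eqP => [[/subsetP sT0 _ _]|->].
    apply/setP => e; rewrite inE; apply/negP => /sT0/clique_edgesP[x [y [_]]].
    by rewrite inE.
  by split; rewrite ?sub0set ?forest0 //; apply/connected_onP => x; rewrite inE.
have n_gt0 : 0 < #|C| by apply/card_gt0P; exists z.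
have := forest_cayley zC (sub0set _) forest0 (_ : _ = #|C|.-1.+1).
rewrite card_components0 prednK // components_weight0 muln1 => /(_ erefl).
have -> : trees_over C set0 = spanning_trees (clique_edges C) C.
  by apply/setP => T; rewrite mem_trees_over sub0set andbT.
case: (ltnP 1 #|C|) => [n_gt1|n_le1] eqN.
  by apply/eqP; rewrite -(eqn_pmul2r n_gt0) eqN -expnSr -subSn // subSS subn1.
have n1 : #|C| = 1 by apply/eqP; rewrite eqn_leq n_le1.
by move: eqN; rewrite n1 muln1.
Qed.

End Cayley.

(* [E] is the complete graph on [C] glued at the single vertex [o] to a graph on [V]. *)
Section Gluing.
Variable gT : finGroupType.
Variables (E : {set {set gT}}) (G C V : {set gT}) (o : gT).
Hypotheses (CIV : C :&: V = [set o]) (CUV : C :|: V = G)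
  (sKE : clique_edges C \subset E)
  (EV : {in E :\: clique_edges C, forall e : {set gT}, e \subset V}).
Implicit Types (A B T : {set {set gT}}).

Local Notation K := (clique_edges C).
Local Notation E' := (E :\: clique_edges C).

Let oC : o \in C. Proof. by have /setIP[] : o \in C :&: V by rewrite CIV set11. Qed.
Let oV : o \in V. Proof. by have /setIP[] : o \in C :&: V by rewrite CIV set11. Qed.
Let CV_o a : a \in C -> a \in V -> a = o.
Proof. by move=> aC aV; apply/set1P; rewrite -CIV inE aC. Qed.

Let E'V a b : [set a; b] \in E' -> (a \in V) && (b \in V).
Proof. by move/EV/subsetP => sV; rewrite !sV ?set21 ?set22. Qed.

Let toC z := if z \in C then z else o.
Let toV z := if z \in V then z else o.

Lemma connect_toC A B x y : A \subset K -> B \subset E' ->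
  connect (edge_rel (A :|: B)) x y -> connect (edge_rel A) (toC x) (toC y).
Proof.
move=> sAK sBE'; apply: connect_homo => a b; rewrite /edge_rel inE => /orP[abA|abB].
  have := subsetP sAK _ abA; rewrite mem_clique_edges => /and3P[aC bC _].
  by rewrite /toC aC bC; apply: connect1.
have /andP[aV bV] := E'V (subsetP sBE' _ abB).
have toC_o w : w \in V -> toC w = o by rewrite /toC; case: ifP => // wC /(CV_o wC).
by rewrite !toC_o.
Qed.

Lemma connect_toV A B x y : A \subset K -> B \subset E' ->
  connect (edge_rel (A :|: B)) x y -> connect (edge_rel B) (toV x) (toV y).
Proof.
move=> sAK sBE'; apply: connect_homo => a b; rewrite /edge_rel inE => /orP[abA|abB].
  have := subsetP sAK _ abA; rewrite mem_clique_edges => /and3P[aC bC _].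
  have toV_o w : w \in C -> toV w = o by rewrite /toV; case: ifP => // wV /CV_o->.
  by rewrite !toV_o.
have /andP[aV bV] := E'V (subsetP sBE' _ abB).
by rewrite /toV aV bV; apply: connect1.
Qed.

Lemma spanning_trees_split T : T \in spanning_trees E G ->
  T :&: K \in spanning_trees K C /\ T :\: K \in spanning_trees E' V.
Proof.
case/spanning_treesP => sTE /connected_onP Tc Tf.
have sAK : T :&: K \subset K by apply: subsetIr.
have sBE' : T :\: K \subset E' by apply: setSD.
have eT : T = (T :&: K) :|: (T :\: K) by rewrite setID.
have GC : {subset C <= G} by move=> w wC; rewrite -CUV inE wC.
have GV : {subset V <= G} by move=> w wV; rewrite -CUV inE wV orbT.
split; apply/spanning_treesP; split=> //.
- apply/connected_onP => x y xC yC.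
  have := Tc _ _ (GC _ xC) (GC _ yC); rewrite {1}eT => /(connect_toC sAK sBE').
  by rewrite /toC xC yC.
- exact: forestS (subsetIl _ _) Tf.
- apply/connected_onP => x y xV yV.
  have := Tc _ _ (GV _ xV) (GV _ yV); rewrite {1}eT => /(connect_toV sAK sBE').
  by rewrite /toV xV yV.
- exact: forestS (subsetDl _ _) Tf.
Qed.

Lemma spanning_trees_join A B : A \in spanning_trees K C -> B \in spanning_trees E' V ->
  A :|: B \in spanning_trees E G.
Proof.
move=> /spanning_treesP[sAK /connected_onP Ac Af].
move=> /spanning_treesP[sBE' /connected_onP Bc Bf].
have BnK e : e \in B -> e \notin K by move/(subsetP sBE'); rewrite inE => /andP[].
apply/spanning_treesP; split.
- by rewrite subUset (subset_trans sAK sKE) (subset_trans sBE' (subsetDl _ _)).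
- have to_o w : w \in G -> connect (edge_rel (A :|: B)) w o.
    rewrite -CUV inE => /orP[wC|wV].
      by apply: connect_edgeS (subsetUl _ _) _; apply: Ac wC oC.
    by apply: connect_edgeS (subsetUr _ _) _; apply: Bc wV oV.
  apply/connected_onP => x y xG yG; apply: connect_trans (to_o _ xG) _.
  by rewrite connect_edge_sym; apply: to_o.
apply/forestP => x y /setUP[xyA|xyB].
  have xyB : [set x; y] \notin B by apply: contraL (subsetP sAK _ xyA); apply: BnK.
  have -> : (A :|: B) :\ [set x; y] = (A :\ [set x; y]) :|: B.
    by apply/setP => e; rewrite !inE; case: eqP => // ->; rewrite (negbTE xyB).
  have := subsetP sAK _ xyA; rewrite mem_clique_edges => /and3P[xC yC _].
  apply/negP => /(connect_toC (subset_trans (subD1set _ _) sAK) sBE').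
  by rewrite /toC xC yC; apply/negP/(forestP _ Af).
have xyA : [set x; y] \notin A by apply: contraNN (BnK _ xyB) => /(subsetP sAK).
have -> : (A :|: B) :\ [set x; y] = A :|: (B :\ [set x; y]).
  by apply/setP => e; rewrite !inE; case: eqP => // ->; rewrite (negbTE xyA).
have /andP[xV yV] := E'V (subsetP sBE' _ xyB).
apply/negP => /(connect_toV sAK (subset_trans (subD1set _ _) sBE')).
by rewrite /toV xV yV; apply/negP/(forestP _ Bf).
Qed.

Lemma card_spanning_trees_glue :
  #|spanning_trees E G| = #|spanning_trees K C| * #|spanning_trees E' V|.
Proof.
have split_inj : {in spanning_trees E G &, injective (fun T => (T :&: K, T :\: K))}.
  by move=> T1 T2 _ _ [eK eE']; rewrite -(setID T1 K) eK eE' setID.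
rewrite -cardsX -(card_in_imset split_inj); apply: eq_card => -[A B].
rewrite in_setX; apply/imsetP/andP => [[T /spanning_trees_split + [-> ->]]|] //.
move=> [AK BE']; exists (A :|: B); first exact: spanning_trees_join.
have /spanning_treesP[sAK _ _] := AK; have /spanning_treesP[sBE' _ _] := BE'.
have dBK : [disjoint B & K] by move: sBE'; rewrite subsetD => /andP[].
have /eqP AK0 : A :\: K == set0 by rewrite setD_eq0.
by rewrite setIUl setDUl (setIidPl sAK) (disjoint_setI0 dBK) (setDidPl dBK) AK0 setU0 set0U.
Qed.

End Gluing.

Section MaximalPrimeOrder.
Local Open Scope group_scope.
Variables (gT : finGroupType) (G : {group gT}) (g : gT).
Hypotheses (gG : g \in G) (pr_g : prime #[g])
  (max_g : forall y, y \in G -> #[g] %| #[y] -> #[y] = #[g]).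

Local Notation C := <[g]>.
Local Notation V := (G :\: C^#).

Lemma power_adj_cycle_nt a b : a \in C^# -> b \in G -> power_adj a b -> b \in C.
Proof.
move=> aC bG /andP[_]; rewrite -(nt_gen_prime pr_g aC).
case/orP=> [sCb|]; last by rewrite -cycle_subG.
have ob : #[b] = #[g] by apply/max_g/cardSg.
suff -> : C = <[b]> by apply: cycle_id.
by apply/eqP; rewrite eqEcard sCb /= -/(order b) ob.
Qed.

Lemma clique_cycle_sub_power_edges : clique_edges C \subset power_edges G.
Proof.
apply/subsetP => _ /clique_edgesP[x [y [-> xC yC xy]]].
have sCG : C \subset G by rewrite cycle_subG.
rewrite inE; apply/exists_inP; exists x; first exact: subsetP xC.
apply/exists_inP; exists y; first exact: subsetP yC.
rewrite eqxx /power_adj xy /=; have [->|x1] := eqVneq x 1; first by rewrite cycle1 sub1G.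
by rewrite -(nt_gen_prime pr_g (_ : x \in C^#)) ?cycle_subG ?yC ?orbT // !inE x1.
Qed.

Lemma power_edges_off_cycle :
  {in power_edges G :\: clique_edges C, forall e : {set gT}, e \subset V}.
Proof.
move=> e /setDP[+ notK]; rewrite inE.
case/exists_inP=> x xG /exists_inP[y yG /andP[/eqP exy adj]].
move: notK; rewrite exy mem_clique_edges => notK.
have adj' : power_adj y x by rewrite /power_adj eq_sym orbC.
have xy : x != y by case/andP: adj.
apply/subsetP => z /set2P[]->; rewrite inE ?xG ?yG andbT; apply: contra notK.
  by move=> /[dup] /setD1P[_ ->] /power_adj_cycle_nt/(_ yG adj) ->; rewrite xy.
by move=> /[dup] /setD1P[_ ->] /power_adj_cycle_nt/(_ xG adj') ->; rewrite xy.
Qed.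

Lemma kappa_cycle_factor :
  kappa G = (#[g] ^ (#[g] - 2) * #|spanning_trees (power_edges G :\: clique_edges C) V|)%N.
Proof.
have sCG : C \subset G by rewrite cycle_subG.
have CIV : C :&: V = [set 1].
  apply/setP => z; rewrite !inE; case: (eqVneq z 1) => [->|].
    by rewrite group1 (subsetP sCG).
  by case: (z \in C); rewrite ?andbF.
have CUV : C :|: V = G.
  apply/setP => z; rewrite !inE; case zC: (z \in C) => /=; last by rewrite andbF.
  by rewrite (subsetP sCG) ?zC.
transitivity #|spanning_trees (power_edges G) G|; first by [].
rewrite (card_spanning_trees_glue CIV CUV clique_cycle_sub_power_edges power_edges_off_cycle).
by rewrite cayley_formula -orderE.
Qed.

End MaximalPrimeOrder.

Theorem lemma3p5 (gT : finGroupType) (G : {group gT}) (p : nat) :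
  p \in \pi(G) -> p \in mu G -> p ^ (p - 2) %| kappa G.
Proof.
move=> piG; rewrite unfold_in => /andP[]; rewrite unfold_in.
move=> /exists_inP[g gG /eqP og] /forall_inP max_p.
have pr_g : prime #[g]%g by rewrite og; move: piG; rewrite mem_primes => /andP[].
have max_g y : y \in G -> #[g]%g %| #[y]%g -> #[y]%g = #[g]%g.
  by rewrite og => yG /(implyP (max_p y yG)) /eqP.
by rewrite (kappa_cycle_factor gG pr_g max_g) og dvdn_mulr.
Qed.
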